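(* Let $C>0$ and $Q\in\mathbb{N}$. There is a constant $C'>0$ depending only on $C$ and $Q$ such that for every image $I$ of width $w\geqslant2$ and every strip pattern set $\mathcal{L}$ of width $C$ and density $Q$ on $I$, $r(\mathcal{L})\leqslant C'w$.
   Context: Image: an image of width $w\geqslant2$ and height $h\geqslant1$ is a set of pixels identified with the integer points $(x,y)$, $x\in\{0,\dots,w-1\}$, $y\in\{0,\dots,h-1\}$. A pattern is a nonempty subset of the image; a pattern set is a nonempty set of distinct patterns. For a pattern set $\mathcal{T}$, $S(\mathcal{T})=|\mathcal{T}|\cdot|\bigcap_{T\in\mathcal{T}}T|$ and $r(\mathcal{T})=\max_{\varnothing\neq\mathcal{R}\subseteq\mathcal{T}}S(\mathcal{R})$. Strips: for a line $l$ and $C>0$, $s(l,C)=\{r\in\mathbb{R}^2\mid\rho(r,l)\leqslant C/2\}$, $\rho$ Euclidean distance. A line is mostly horizontal inclined to the right if it has equation $y=ax+b$ with $0\leqslant a\leqslant1$; it is integer at the image of width $w$ if $a=\frac{e}{w-1}$ for some $e\in\{0,\dots,w-1\}$. Patterns $T\in\mathcal{M}$ are $C$-parallel if there exist integer lines $l(T)$, $T\in\mathcal{M}$, all of the same slope, with $T\subset s(l(T),C)$ for all $T$. A pattern set $\mathcal{L}$ is a strip pattern set of width $C$ and density $Q$ if (1) every $L\in\mathcal{L}$ satisfies $L\subset s(l,C)$ for some integer line $l$, and (2) every $C$-parallel $\mathcal{M}\subseteq\mathcal{L}$ with $\bigcap_{L\in\mathcal{M}}L\neq\varnothing$ has $|\mathcal{M}|\leqslant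 Q$. *)

From HB Require Import structures.
From mathcomp Require Import all_boot all_order all_algebra.
From mathcomp Require Import reals.
Set Implicit Arguments. Unset Strict Implicit. Unset Printing Implicit Defensive.
Import Order.TTheory GRing.Theory Num.Theory.
Local Open Scope ring_scope.

Definition pixel (w h : nat) : finType := ('I_w * 'I_h)%type.

Section Defs.
Variable R : realType.

Definition dist_line (a b x y : R) : R :=
  `|y - a * x - b| / Num.sqrt (1 + a ^+ 2).

Definition int_slope (w e : nat) : R := e%:R / (w.-1)%:R.

Definition in_strip (w e : nat) (b C x y : R) : bool :=
  dist_line (int_slope w e) b x y <= C / 2.

Variables (w h : nat).

Definition pattern_in_strip (e : nat) (b C : R) (T : {set pixel w h}) : Prop :=
  forall p : pixel w h, p \in T ->
    in_strip w e b C (nat_of_ord p.1)%:R (nat_of_ord p.2)%:R.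

(* L ⊂ s(l, C) for some integer (mostly horizontal, right-inclined) line l *)
Definition in_some_strip (C : R) (T : {set pixel w h}) : Prop :=
  exists e : nat, (e < w)%N /\ exists b : R, pattern_in_strip e b C T.

Definition C_parallel (C : R) (M : {set {set pixel w h}}) : Prop :=
  exists e : nat, (e < w)%N /\
    exists bT : {set pixel w h} -> R,
      forall T, T \in M -> pattern_in_strip e (bT T) C T.

Definition pattern_set (L : {set {set pixel w h}}) : Prop :=
  L != set0 /\ forall T, T \in L -> T != set0.

Definition strip_pattern_set (C : R) (Q : nat) (L : {set {set pixel w h}}) : Prop :=
  (forall T, T \in L -> in_some_strip C T) /\
  (forall M : {set {set pixel w h}}, M \subset L -> C_parallel C M ->
     \bigcap_(T in M) T != set0 -> (#|M| <= Q)%N).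

End Defs.

Definition Sval (w h : nat) (T : {set {set pixel w h}}) : nat :=
  (#|T| * #|\bigcap_(P in T) P|)%N.

Definition rval (w h : nat) (T : {set {set pixel w h}}) : nat :=
  \max_(Rr in powerset T | Rr != set0) Sval Rr.

From HB Require Import structures.
From mathcomp Require Import all_boot all_order all_algebra.
From mathcomp Require Import reals boolp.
From mathcomp Require Import ring lra zify.
Set Implicit Arguments.
Unset Strict Implicit.
Unset Printing Implicit Defensive.
Import Order.TTheory GRing.Theory Num.Theory.
Local Open Scope ring_scope.

(* Fix a subfamily F of L whose patterns share a pixel, and one integer strip
   for each pattern.  A point of a strip of slope at most 1 lies within
   vertical distance C of its line, so each column of the common part of F
   holds at most N pixels for any integer N > 2C, and if that common part
   spans D + 1 columns it has at most (D + 1) N pixels.  Any two of the strips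
   contain the two extreme common pixels, D columns apart, so their slopes
   e/(w-1) and e'/(w-1) satisfy |e - e'| D <= 4C(w-1).  Hence F uses at most
   4C(w-1)/D + 1 slopes (and at most w), and by density at most Q of its
   patterns share a slope; altogether |F| |cap F| <= Q N (4C + 2) w. *)

Lemma card_le_size_inj_in (T : finType) (U : eqType) (A : {pred T})
    (f : T -> U) (s : seq U) :
  {in A &, injective f} -> {in A, forall x, f x \in s} -> (#|A| <= size s)%N.
Proof.
move=> f_inj f_s; rewrite cardE -(size_map f).
apply: uniq_leq_size => [|_ /mapP[x + ->]]; last first.
  by rewrite mem_enum; apply: f_s.
rewrite map_inj_in_uniq ?enum_uniq // => x y.
by rewrite !mem_enum; apply: f_inj.
Qed.

Lemma eq_of_eqmodn (N a b : nat) :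
  a = b %[mod N] -> (a < b + N)%N -> (b < a + N)%N -> a = b.
Proof.
wlog le_ba : a b / (b <= a)%N => [wlog_ba|].
  case: (leqP b a) => [/wlog_ba//|/ltnW /wlog_ba le_ab /esym *].
  by symmetry; apply: le_ab.
move=> /eqP + lt_ab _; rewrite eqn_mod_dvd // => dvd_ab.
have [/eqP|lt0] := posnP (a - b)%N; first by rewrite subn_eq0 => le_ab; lia.
by move: dvd_ab; rewrite gtnNdvd //; lia.
Qed.

Section StripGeometry.
Variable R : realType.

Lemma int_slope_ge0 (w e : nat) : 0 <= int_slope R w e.
Proof. by rewrite divr_ge0. Qed.

Lemma int_slope_le1 (w e : nat) : (e < w)%N -> int_slope R w e <= 1.
Proof.
rewrite /int_slope; have [w1|w_gt1] := leqP w 1.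
  by move=> _; rewrite (_ : w.-1 = 0%N) ?invr0 ?mulr0 //; lia.
by move=> e_lt_w; rewrite ler_pdivrMr ?ltr0n ?mul1r ?ler_nat; lia.
Qed.

Lemma vdist_le_dist_line (a b x y : R) :
  0 <= a <= 1 -> `|y - a * x - b| <= 2 * dist_line a b x y.
Proof.
case/andP=> a_ge0 a_le1; rewrite /dist_line.
have sqrt_gt0 : 0 < Num.sqrt (1 + a ^+ 2) by rewrite sqrtr_gt0; nra.
have sqrt_le2 : Num.sqrt (1 + a ^+ 2) <= 2.
  rewrite -[leRHS](@ger0_norm _ 2) // -sqrtr_sqr ler_wsqrtr //; nra.
by rewrite mulrA ler_pdivlMr // mulrC ler_wpM2r.
Qed.

Lemma in_strip_vdist (w e : nat) (b C x y : R) : (e < w)%N ->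
  in_strip w e b C x y -> `|y - int_slope R w e * x - b| <= C.
Proof.
move=> e_lt_w; rewrite /in_strip => strip.
have slope01 : 0 <= int_slope R w e <= 1.
  by rewrite int_slope_ge0 int_slope_le1.
by have := vdist_le_dist_line b x y slope01; lra.
Qed.

(* (a - a') (xq - xp) is a signed sum of the four vertical offsets. *)
Lemma slope_gap (a a' b b' C xp yp xq yq : R) :
  `|yp - a * xp - b| <= C -> `|yq - a * xq - b| <= C ->
  `|yp - a' * xp - b'| <= C -> `|yq - a' * xq - b'| <= C ->
  `|a - a'| * `|xq - xp| <= 4 * C.
Proof.
move=> /ler_normlP[? ?] /ler_normlP[? ?] /ler_normlP[? ?] /ler_normlP[? ?].
have -> : `|a - a'| * `|xq - xp| =
    `|(yq - a' * xq - b' - (yp - a' * xp - b'))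
      - (yq - a * xq - b - (yp - a * xp - b))|.
  by rewrite -normrM; congr `|_|; ring.
by apply/ler_normlP; split; lra.
Qed.

Section Pixels.
Variables w h : nat.
Implicit Types (T : {set pixel w h}) (p q : pixel w h).

Lemma pattern_in_strip_subset (e : nat) (b C : R) T T' :
  T' \subset T -> pattern_in_strip e b C T -> pattern_in_strip e b C T'.
Proof. by move=> /subsetP sub_T'T strip p /sub_T'T; apply: strip. Qed.

Lemma card_strip_le (e lo hi N : nat) (b C : R) T : (e < w)%N ->
  2 * C < N%:R -> pattern_in_strip e b C T ->
  {in T, forall p, lo <= p.1 <= hi}%N -> (#|T| <= (hi - lo).+1 * N)%N.
Proof.
move=> e_lt_w N_gt2C strip x_range.
have vdist p : p \in T ->
    `|(p.2 : nat)%:R - int_slope R w e * (p.1 : nat)%:R - b| <= C.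
  by move=> pT; apply: in_strip_vdist e_lt_w (strip p pT).
have := @card_le_size_inj_in _ _ (mem T) (fun p => ((p.1 : nat), (p.2 %% N)%N))
  [seq (x, r) | x <- iota lo (hi - lo).+1, r <- iota 0 N].
rewrite size_allpairs !size_iota; apply.
  move=> [x y] [x' y'] /vdist + /vdist + /= [eq_x eq_mod].
  rewrite eq_x /= => /ler_normlP[? ?] /ler_normlP[? ?].
  have eq_y : (y : nat) = y'.
    by apply: (eq_of_eqmodn eq_mod); rewrite -(ltr_nat R) natrD; lra.
  by congr pair; apply: val_inj.
move=> p pT; have N_gt0 : (0 < N)%N.
  have C_ge0 : 0 <= C := le_trans (normr_ge0 _) (vdist p pT).
  by rewrite -(ltr0n R); lra.
apply: allpairs_f; rewrite mem_iota ?ltn_mod ?N_gt0 //.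
by have := x_range p pT; lia.
Qed.

Lemma slope_gap_pixel (e e' : nat) (b b' C : R) T p q : (1 < w)%N ->
  (e < w)%N -> (e' < w)%N ->
  pattern_in_strip e b C T -> pattern_in_strip e' b' C T ->
  p \in T -> q \in T ->
  ((e - e') * (q.1 - p.1))%:R <= 4 * C * (w.-1)%:R.
Proof.
move=> w_gt1 e_lt_w e'_lt_w strip strip' pT qT.
have w1_gt0 : 0 < (w.-1)%:R :> R by rewrite ltr0n; lia.
have gap := slope_gap (in_strip_vdist e_lt_w (strip p pT))
  (in_strip_vdist e_lt_w (strip q qT)) (in_strip_vdist e'_lt_w (strip' p pT))
  (in_strip_vdist e'_lt_w (strip' q qT)).
have C_ge0 : 0 <= C.
  exact: le_trans (normr_ge0 _) (in_strip_vdist e_lt_w (strip p pT)).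
have [le_e'e|lt_ee'] := leqP e' e; last first.
  by rewrite (_ : e - e' = 0)%N ?mul0n ?mulr_ge0 //; lia.
have [le_pq|lt_qp] := leqP p.1 q.1; last first.
  by rewrite (_ : q.1 - p.1 = 0)%N ?muln0 ?mulr_ge0 //; lia.
rewrite natrM !natrB //.
have -> : (e%:R - e'%:R) * ((q.1 : nat)%:R - (p.1 : nat)%:R) =
    (int_slope R w e - int_slope R w e') * ((q.1 : nat)%:R - (p.1 : nat)%:R) *
    (w.-1)%:R :> R.
  by rewrite /int_slope -mulrBl mulrAC mulfVK // gt_eqF.
by rewrite ler_pM2r //; apply: le_trans gap; rewrite -normrM ler_norm.
Qed.

End Pixels.
End StripGeometry.

Lemma mul_card_extent_le (R : realType) (C : R) (g s d w : nat) : 0 <= C ->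
  (g <= s.+1)%N -> (g <= w)%N -> (d < w)%N ->
  (s * d)%:R <= 4 * C * (w.-1)%:R -> (g * d.+1)%:R <= (4 * C + 2) * w%:R.
Proof.
move=> C_ge0 g_le_s1 g_le_w d_lt_w sd_le.
have gd_le : (g * d.+1 <= s * d + d + w)%N by nia.
have w1_le_w : (w.-1)%:R <= w%:R :> R by rewrite ler_nat leq_pred.
have d_le_w : d%:R <= w%:R :> R by rewrite ler_nat ltnW.
apply: le_trans (_ : (s * d + d + w)%:R <= _); first by rewrite ler_nat.
by rewrite !natrD; nra.
Qed.

Section StripFamilies.
Variables (R : realType) (w h : nat) (C : R) (Q : nat).
Implicit Types (T : {set pixel w h}) (F L : {set {set pixel w h}}).

Lemma exists_strip_choice L : (0 < w)%N ->
  (forall T, T \in L -> in_some_strip C T) ->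
  exists (e : {set pixel w h} -> 'I_w) (b : {set pixel w h} -> R),
    forall T, T \in L -> pattern_in_strip (e T) (b T) C T.
Proof.
move=> w_gt0 L_strips.
have /choice[eb ebP] : forall T, exists eb : 'I_w * R,
    T \in L -> pattern_in_strip eb.1 eb.2 C T.
  move=> T; have [/L_strips[e [e_lt_w [b strip]]]|_] := boolP (T \in L).
    by exists (Ordinal e_lt_w, b).
  by exists (Ordinal w_gt0, 0).
by exists (fun T => (eb T).1), (fun T => (eb T).2).
Qed.

Lemma card_le_slopes_mul F L (e : {set pixel w h} -> 'I_w)
    (b : {set pixel w h} -> R) :
  strip_pattern_set C Q L -> F \subset L ->
  (forall T, T \in L -> pattern_in_strip (e T) (b T) C T) ->
  \bigcap_(T in F) T != set0 -> (#|F| <= #|e @: F| * Q)%N.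
Proof.
move=> [_ dense] /subsetP FL strips /set0Pn[p /bigcapP capF].
rewrite -sum1_card (partition_big e (mem (e @: F))) /=; last first.
  by move=> T; apply: imset_f.
rewrite -sum_nat_const; apply: leq_sum => s _; rewrite sum1dep_card.
apply: dense.
- by apply/subsetP => T; rewrite inE => /andP[/FL].
- exists s; split; first exact: ltn_ord.
  by exists b => T; rewrite inE => /andP[/FL/strips + /eqP <-].
- apply/set0Pn; exists p; apply/bigcapP => T.
  by rewrite inE => /andP[/capF].
Qed.

Lemma Sval_strip_le (N : nat) L F : (1 < w)%N -> 0 <= C -> 2 * C < N%:R ->
  strip_pattern_set C Q L -> F \subset L ->
  (Sval F)%:R <= (Q * N)%:R * ((4 * C + 2) * w%:R).
Proof.
move=> w_gt1 C_ge0 N_gt2C Lspat FL.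
have [e [b strips]] := exists_strip_choice (ltnW w_gt1) Lspat.1.
rewrite /Sval; set I := \bigcap_(T in F) T.
have [->|[p0 p0I]] := set_0Vmem I.
  by rewrite cards0 muln0 !mulr_ge0 //; lra.
have [F0|[T0 T0F]] := set_0Vmem F; first by rewrite F0 cards0 !mulr_ge0 //; lra.
have I_strip T : T \in F -> pattern_in_strip (e T) (b T) C I.
  move=> TF; apply: pattern_in_strip_subset (bigcap_inf _ TF) _.
  exact: strips (subsetP FL T TF).
set G := e @: F; have e0G : e T0 \in G by apply: imset_f.
have [pm pmI pmP] := arg_minnP (fun p : pixel w h => (p.1 : nat)) p0I.
have [pM pMI pMP] := arg_maxnP (fun p : pixel w h => (p.1 : nat)) p0I.
have [_ /imsetP[T1 T1F ->] emP] := arg_minnP (fun s : 'I_w => (s : nat)) e0G.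
have [_ /imsetP[T2 T2F ->] eMP] := arg_maxnP (fun s : 'I_w => (s : nat)) e0G.
have cardI : (#|I| <= (pM.1 - pm.1).+1 * N)%N.
  apply: card_strip_le (ltn_ord (e T0)) N_gt2C (I_strip T0 T0F) _ => p pI.
  by apply/andP; split; [exact: pmP | exact: pMP].
have cardG : (#|G| <= (e T2 - e T1).+1)%N.
  have := @card_le_size_inj_in _ _ (mem G) (@nat_of_ord w)
    (iota (e T1) (e T2 - e T1).+1).
  rewrite size_iota; apply.
    by move=> s s' _ _; apply: ord_inj.
  move=> s sG; rewrite mem_iota.
  by have := emP s sG; have : (s <= e T2)%N := eMP s sG; lia.
have gap : ((e T2 - e T1) * (pM.1 - pm.1))%:R <= 4 * C * (w.-1)%:R.
  exact: slope_gap_pixel w_gt1 (ltn_ord _) (ltn_ord _) (I_strip _ T2F)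
    (I_strip _ T1F) pmI pMI.
have cardF : (#|F| <= #|G| * Q)%N.
  by apply: card_le_slopes_mul Lspat FL strips _; apply/set0Pn; exists p0.
have G_le_w : (#|G| <= w)%N by have := max_card G; rewrite card_ord.
have extent_lt_w : (pM.1 - pm.1 < w)%N by have := ltn_ord pM.1; lia.
apply: le_trans (_ : _ <= (#|G| * (pM.1 - pm.1).+1 * (Q * N))%:R) _.
  by rewrite ler_nat mulnACA leq_mul.
rewrite natrM mulrC ler_wpM2l //.
exact: mul_card_extent_le C_ge0 cardG G_le_w extent_lt_w gap.
Qed.

End StripFamilies.

Theorem lemma3 (R : realType) (C : R) (Q : nat) :
  0 < C ->
  exists C' : R, 0 < C' /\
    forall (w h : nat), (2 <= w)%N -> (1 <= h)%N ->
    forall L : {set {set pixel w h}},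
      pattern_set L -> strip_pattern_set C Q L ->
      (rval L)%:R <= C' * w%:R.
Proof.
move=> C_gt0; pose N := Num.Def.archi_bound (2 * C).
have N_gt2C : 2 * C < N%:R by apply: archi_boundP; lra.
have QN_ge0 : 0 <= (Q * N)%:R * (4 * C + 2) by rewrite mulr_ge0 //; lra.
exists ((Q * N)%:R * (4 * C + 2) + 1); split; first lra.
move=> w h w_gt1 _ L _ Lspat; rewrite /rval.
apply: (big_ind (fun n : nat => n%:R <= _)) => [|m n|F].
- by rewrite mulr_ge0 //; lra.
- by rewrite /maxn; case: ifP.
rewrite powersetE => /andP[FL _].
apply: le_trans (Sval_strip_le w_gt1 (ltW C_gt0) N_gt2C Lspat FL) _.
by rewrite mulrA ler_wpM2r // mulrDl mul1r lerDl.
Qed.
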